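(* Let $G$ be a coloured graph with associated linear space $\mathcal L\subseteq\mathbb S^n$, and let $\mathcal L'\subseteq\mathbb S^n$ be the linear space defined below. Let $\mathcal L^\perp\subseteq\mathbb S^n$ be the orthogonal complement of $\mathcal L$ with respect to the trace inner product $\langle M,N\rangle=\operatorname{tr}(MN)$, let $(\mathcal L^\perp)'=\mathcal L^\perp\cap\mathcal L'$, and let $S'$ be a general matrix of $\mathcal L'$. Then the ML degree of $\mathcal L$ equals the cardinality of the set $\mathcal L^{-1}\cap\big((\mathcal L^\perp)'+S'\big)$, where $(\mathcal L^\perp)'+S'=\{X'+S':X'\in(\mathcal L^\perp)'\}$.
   Context: A coloured graph is a simple undirected graph $G=(V,E)$, $V=\{1,\dots,n\}$, with a partition of $V$ and a partition of $E$ into colours $\gamma_1,\dots,\gamma_d$. For a vertex colour $\gamma_k$, $A_k$ is diagonal with $(A_k)_{ii}=1$ iff vertex $i$ has colour $\gamma_k$; for an edge colour $\gamma_k$, $A_k$ is symmetric with $(A_k)_{ij}=(A_k)_{ji}=1$ iff $\{i,j\}\in E$ has colour $\gamma_k$, all other entries $0$. The coloured adjacency matrix is $A=\sum_k\lambda_kA_k$ and $\mathcal L=\{\sum_k\lambda_kA_k:\lambda_k\in\mathbb C\}\subseteq\mathbb S^n$ (complex symmetric matrices). The reciprocal variety $\mathcal L^{-1}$ is the Zariski closure of $\{M^{-1}:M\in\mathcal L\text{ invertible}\}$, with ideal $I(\mathcal L^{-1})\subseteq\mathbb C[x_{ij}:1\le i\le j\le n]$ ($x_{ji}=x_{ij}$,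 $X=(x_{ij})$). A symmetry of $G$ is a permutation matrix $B$ with $BAB^{-1}=A$. Let $I'$ be the ideal generated by (i) all entries of $BXB^{-1}-X$ for all symmetries $B$ of $G$, and (ii) all variables $x_{ij}$ with $i,j$ in different connected components of $G$; set $\mathcal L'=V(I')\subseteq\mathbb S^n$ (a linear subspace containing $\mathcal L$). The ML degree of $\mathcal L$ is the cardinality of $\mathcal L^{-1}\cap(\mathcal L^\perp+S)$ for a general $S\in\mathbb S^n$. *)

From HB Require Import structures.
From mathcomp Require Import all_boot all_order all_algebra all_fingroup.
From mathcomp Require Import mpoly.
Set Implicit Arguments. Unset Strict Implicit. Unset Printing Implicit Defensive.
Import Order.TTheory GRing.Theory Num.Theory.
Local Open Scope ring_scope.

(* Every vertex gets a colour, every edge {i,j} gets a colour (ecol i j,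
   symmetric in i j, only meaningful when adj i j), and no colour is used
   both for a vertex and for an edge. *)
Record cgraph (n d : nat) := CGraph {
  cg_adj : rel 'I_n;
  cg_sym : forall i j, cg_adj i j = cg_adj j i;
  cg_irr : irreflexive cg_adj;
  cg_vcol : 'I_n -> 'I_d;
  cg_ecol : 'I_n -> 'I_n -> 'I_d;
  cg_ecol_sym : forall i j, cg_ecol i j = cg_ecol j i;
  cg_disj : forall i j k, cg_adj j k -> cg_vcol i != cg_ecol j k }.

Section Defs.
Variables (C : numClosedFieldType) (n d : nat) (G : cgraph n d).

Definition symmat (M : 'M[C]_n) : Prop := M^T = M.

Definition colmx (k : 'I_d) : 'M[C]_n :=
  \matrix_(i, j) (if i == j then (cg_vcol G i == k)%:R
                  else if cg_adj G i j then (cg_ecol G i j == k)%:R else 0).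

Definition cadj (lam : 'I_d -> C) : 'M[C]_n := \sum_k lam k *: colmx k.

Definition Lspace (M : 'M[C]_n) : Prop := exists lam, M = cadj lam.

Definition gsymmetry (B : 'M[C]_n) : Prop :=
  exists s : 'S_n, B = perm_mx s /\
    forall lam, B *m cadj lam *m invmx B = cadj lam.

Definition Lprime (X : 'M[C]_n) : Prop :=
  symmat X /\
  (forall B, gsymmetry B -> B *m X *m invmx B = X) /\
  (forall i j, ~~ connect (cg_adj G) i j -> X i j = 0).

(* coordinates of a matrix, for evaluating polynomials in the entries *)
Definition mcoords (X : 'M[C]_n) : 'I_(n * n) -> C := fun i => mxvec X 0 i.

Definition zclosure (P : 'M[C]_n -> Prop) (X : 'M[C]_n) : Prop :=
  symmat X /\
  forall f : {mpoly C[n * n]},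
    (forall Y, P Y -> f.@[mcoords Y] = 0) -> f.@[mcoords X] = 0.

Definition Lrecip : 'M[C]_n -> Prop :=
  zclosure (fun Y => exists M, Lspace M /\ M \in unitmx /\ Y = invmx M).

Definition Lperp (N : 'M[C]_n) : Prop :=
  symmat N /\ forall M, Lspace M -> \tr (M *m N) = 0.

(* P holds for a general point of the irreducible linear space V:
   on a nonempty Zariski-open subset of V *)
Definition generic (V P : 'M[C]_n -> Prop) : Prop :=
  exists f : {mpoly C[n * n]},
    (exists X, V X /\ f.@[mcoords X] != 0) /\
    forall S, V S -> f.@[mcoords S] != 0 -> P S.

Definition has_card (P : 'M[C]_n -> Prop) (m : nat) : Prop :=
  exists s : seq 'M[C]_n, uniq s /\ size s = m /\ forall X, P X <-> X \in s.

Definition MLdegree (m : nat) : Prop :=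
  generic symmat (fun S => has_card (fun X => Lrecip X /\ Lperp (X - S)) m).

End Defs.

From Pilot Require Import Defs.
From mathcomp Require Import all_boot all_order all_algebra all_fingroup.
From mathcomp Require Import mpoly.
From mathcomp Require Import ring.
Import Order.TTheory GRing.Theory Num.Theory.
Local Open Scope ring_scope.

(* The idea:
   every symmetric S splits as S = T + K with T in L (hence in L') and K in
   L^perp, because the colour matrices A_k are pairwise trace-orthogonal with
   tr(A_k A_k) = 0 only when A_k = 0.  Translating the ML-degree genericity
   polynomial f by K gives g(Y) = f(Y + K), nonzero at T in L'.  For S' in L'
   with g(S') != 0 the fibre over S' + K has m points, and it coincides with
   the set in the theorem: K in L^perp does not change the condition
   X - S' in L^perp, and X - S' is automatically in L' because L^-1 lies in
   L'.  This last inclusion holds since any matrix commuting with all of L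
   (a symmetry B, or the indicator diagonal of a connected component) commutes
   with all inverses of elements of L, and commutation is a linear condition,
   hence survives Zariski closure. *)

Section MatrixSpace.
Context {C : numClosedFieldType} {n : nat}.

(* A linear functional is a linear polynomial in the entries, so if it
   vanishes on P it vanishes on the Zariski closure of P. *)
Lemma zclosure_linear_vanish (P : 'M[C]_n -> Prop) (phi : 'M[C]_n -> C)
    (X : 'M[C]_n) :
  (forall a A B, phi (a *: A + B) = a * phi A + phi B) ->
  (forall Y, P Y -> phi Y = 0) -> zclosure P X -> phi X = 0.
Proof.
move=> phi_lin phiP [_ closX].
have phi0 : phi 0 = 0.
  have := phi_lin 1 0 0; rewrite scaler0 add0r mul1r => phi00.
  by apply: (addIr (phi 0)); rewrite add0r -phi00.
have phiD A B : phi (A + B) = phi A + phi B.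
  by have := phi_lin 1 A B; rewrite scale1r mul1r.
have phiZ a A : phi (a *: A) = a * phi A by rewrite -[a *: A]addr0 phi_lin phi0 addr0.
have phi_sum (I : finType) (F : I -> 'M[C]_n) : phi (\sum_i F i) = \sum_i phi (F i).
  exact: (big_morph phi phiD phi0).
pose f : {mpoly C[n * n]} :=
  \sum_i \sum_j (phi (delta_mx i j))%:MP * 'X_(mxvec_index i j).
have fE Y : f.@[mcoords Y] = phi Y.
  rewrite [in RHS](matrix_sum_delta Y) phi_sum raddf_sum.
  apply: eq_bigr => i _; rewrite phi_sum raddf_sum; apply: eq_bigr => j _.
  rewrite phiZ mulrC; apply: (etrans (mevalM _ _ _)).
  by rewrite mevalC mevalXU /mcoords mxvecE.
by rewrite -fE; apply: closX => Y PY; rewrite fE phiP.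
Qed.

Lemma mpoly_translate (f : {mpoly C[n * n]}) (K : 'M[C]_n) :
  exists g : {mpoly C[n * n]}, forall Y, g.@[mcoords Y] = f.@[mcoords (Y + K)].
Proof.
exists (f \mPo [tuple 'X_i + (mcoords K i)%:MP | i < n * n]) => Y.
rewrite comp_mpoly_meval; apply: meval_eq => i.
rewrite tnth_mktuple mevalD mevalXU mevalC /mcoords.
by case/mxvec_indexP: i => k l; rewrite !mxvecE mxE.
Qed.

Lemma has_card_ext (P Q : 'M[C]_n -> Prop) (m : nat) :
  (forall X, P X <-> Q X) -> has_card P m -> has_card Q m.
Proof. by move=> PQ [s [us [sz sP]]]; exists s; do 2!split=> //; move=> X; rewrite -PQ. Qed.

Lemma symmatD {A B : 'M[C]_n} : symmat A -> symmat B -> symmat (A + B).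
Proof. by rewrite /symmat linearD /= => -> ->. Qed.

Lemma symmatB {A B : 'M[C]_n} : symmat A -> symmat B -> symmat (A - B).
Proof. by rewrite /symmat linearB /= => -> ->. Qed.

End MatrixSpace.

Lemma comm_mx_inv (R : comUnitRingType) (k : nat) (M D : 'M[R]_k) :
  M \in unitmx -> comm_mx M D -> comm_mx (invmx M) D.
Proof.
move=> Mu MD; rewrite /comm_mx -[invmx M *m D]mulmx1 -(mulmxV Mu).
by rewrite mulmxA -(mulmxA (invmx M)) -MD mulmxA mulVmx // mul1mx.
Qed.

Section ColouredGraph.
Context {C : numClosedFieldType} {n d : nat} (G : cgraph n d).

Local Notation A := (@colmx C n d G).
Local Notation cadj := (@cadj C n d G).
Local Notation Lprime := (@Lprime C n d G).
Local Notation Lperp := (@Lperp C n d G).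
Local Notation Lrecip := (@Lrecip C n d G).

Lemma colmx_sym k i j : A k j i = A k i j.
Proof. by rewrite !mxE eq_sym cg_sym cg_ecol_sym; case: eqP => [->|]. Qed.

Lemma colmx_idem k i j : A k i j * A k i j = A k i j.
Proof.
rewrite mxE; case: (i == j); last case: (cg_adj G i j);
  rewrite ?mulr0 //; by case: (_ == k); rewrite ?mulr1 ?mulr0.
Qed.

Lemma colmx_ge0 k i j : 0 <= A k i j.
Proof. by rewrite mxE; case: (i == j); last case: (cg_adj G i j). Qed.

Lemma colmx_disjoint k l i j : k != l -> A k i j * A l i j = 0.
Proof.
move=> kl; rewrite !mxE; case: (i == j); last case: (cg_adj G i j);
  rewrite ?mulr0 //; by case: eqP => [->|_]; rewrite ?mul0r // (negbTE kl) mulr0.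
Qed.

Lemma colmx_component k i j : ~~ connect (cg_adj G) i j -> A k i j = 0.
Proof.
move=> ij; rewrite mxE; case: eqP => [eij|_]; first by rewrite eij connect0 in ij.
by case: ifP => // adj; rewrite connect1 in ij.
Qed.

(* For symmetric A_k the trace pairing is the entrywise product. *)
Lemma tr_colmx_mul k l : \tr (A k *m A l) = \sum_i \sum_j A k i j * A l i j.
Proof.
rewrite /mxtrace; apply: eq_bigr => i _; rewrite mxE.
by apply: eq_bigr => j _; rewrite (colmx_sym l).
Qed.

Lemma colmx_orthogonal k l : k != l -> \tr (A k *m A l) = 0.
Proof.
by move=> kl; rewrite tr_colmx_mul !big1 // => i _; rewrite ?big1 // => j _;
  rewrite colmx_disjoint.
Qed.

(* tr(A_k A_k) counts the entries of colour k, so it vanishes only if A_k = 0. *)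
Lemma colmx_norm_eq0 k : \tr (A k *m A k) = 0 -> A k = 0.
Proof.
rewrite tr_colmx_mul => tr0; apply/matrixP => i j; rewrite [RHS]mxE.
have row0 : \sum_j A k i j * A k i j = 0.
  apply: (psumr_eq0P _ tr0) => // i' _.
  by apply: sumr_ge0 => j' _; rewrite colmx_idem colmx_ge0.
rewrite -colmx_idem; apply: (psumr_eq0P _ row0) => // j' _.
by rewrite colmx_idem colmx_ge0.
Qed.

Lemma cadj_entry lam i j : cadj lam i j = \sum_k lam k * A k i j.
Proof. by rewrite summxE; apply: eq_bigr => k _; rewrite mxE. Qed.

Lemma cadj_component lam i j : ~~ connect (cg_adj G) i j -> cadj lam i j = 0.
Proof.
by move=> ij; rewrite cadj_entry big1 // => k _; rewrite colmx_component ?mulr0.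
Qed.

Lemma tr_cadj_mul lam (Y : 'M[C]_n) :
  \tr (cadj lam *m Y) = \sum_k lam k * \tr (A k *m Y).
Proof.
rewrite /Defs.cadj mulmx_suml raddf_sum /=; apply: eq_bigr => k _.
by rewrite -scalemxAl mxtraceZ.
Qed.

Lemma cadj_Lprime lam : Lprime (cadj lam).
Proof.
split; [|split].
- apply/matrixP => i j; rewrite mxE !cadj_entry.
  by apply: eq_bigr => k _; rewrite colmx_sym.
- by move=> B [s [_ ->]].
- exact: cadj_component.
Qed.

(* Orthogonal decomposition S^n = L + L^perp, using the orthogonal spanning
   family (A_k) of L. *)
Lemma Lperp_decomposition {S : 'M[C]_n} :
  symmat S -> exists lam, Lperp (S - cadj lam).
Proof.
move=> symS.
pose lam k := if \tr (A k *m A k) == 0 then 0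
              else \tr (A k *m S) / \tr (A k *m A k).
have trA k : \tr (A k *m cadj lam) = \tr (A k *m S).
  rewrite mxtrace_mulC tr_cadj_mul (bigD1 k) //= big1 ?addr0 => [|l lk].
    rewrite /lam; case: eqP => [/colmx_norm_eq0 ->|/eqP nz]; last by rewrite divfK.
    by rewrite !mul0mx mxtrace0 mul0r.
  by rewrite colmx_orthogonal ?mulr0.
exists lam; split; first by apply: symmatB => //; case: (cadj_Lprime lam).
move=> _ [mu ->]; rewrite tr_cadj_mul big1 // => k _.
by rewrite mulmxBr raddfB /= trA subrr mulr0.
Qed.

Lemma LprimeB {X Y : 'M[C]_n} : Lprime X -> Lprime Y -> Lprime (X - Y).
Proof.
move=> [symX [symmX compX]] [symY [symmY compY]]; split; first exact: symmatB.
split=> [B BG|i j ij]; first by rewrite mulmxBr mulmxBl symmX // symmY.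
by rewrite !mxE compX // compY // subrr.
Qed.

Lemma LperpD {X Y : 'M[C]_n} : Lperp X -> Lperp Y -> Lperp (X + Y).
Proof.
move=> [symX perpX] [symY perpY]; split; first exact: symmatD.
by move=> M LM; rewrite mulmxDr mxtraceD perpX // perpY // addr0.
Qed.

Lemma LperpB {X Y : 'M[C]_n} : Lperp X -> Lperp Y -> Lperp (X - Y).
Proof.
move=> [symX perpX] [symY perpY]; split; first exact: symmatB.
by move=> M LM; rewrite mulmxBr raddfB /= perpX // perpY // subrr.
Qed.

(* The commutant of L is contained in the commutant of L^-1: commuting with D
   is a linear condition, and it holds on inverses of invertible elements of L. *)
Lemma Lrecip_comm {D X : 'M[C]_n} :
  (forall lam, comm_mx (cadj lam) D) -> Lrecip X -> comm_mx X D.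
Proof.
move=> LD recX; apply/matrixP => i j; apply/eqP; rewrite -subr_eq0; apply/eqP.
apply: (zclosure_linear_vanish _ (fun Y => (Y *m D) i j - (D *m Y) i j) _ _ _ recX).
  by move=> a Y Y'; rewrite mulmxDl mulmxDr -scalemxAl -scalemxAr !mxE; ring.
by move=> _ [_ [[lam ->] [Mu ->]]]; rewrite comm_mx_inv // subrr.
Qed.

Lemma Lrecip_Lprime {X : 'M[C]_n} : Lrecip X -> Lprime X.
Proof.
move=> recX; split; first by case: recX.
split=> [B [s [defB Bsym]] | i j ij].
  have Bu : B \in unitmx by rewrite defB unitmx_perm.
  have LB lam : comm_mx (cadj lam) B.
    by rewrite /comm_mx -{1}(Bsym lam) -mulmxA mulVmx // mulmx1.
  by rewrite -(Lrecip_comm LB recX) -mulmxA mulmxV // mulmx1.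
pose D : 'M[C]_n := diag_mx (\row_k (connect (cg_adj G) i k)%:R).
have LD lam : comm_mx (cadj lam) D.
  apply/matrixP => k l; rewrite mul_mx_diag mul_diag_mx !mxE.
  case kl: (connect (cg_adj G) k l).
    by rewrite (same_connect_r (sym_connect_sym (cg_sym G)) kl) mulrC.
  by rewrite cadj_component ?kl // mulr0 mul0r.
move/matrixP: (Lrecip_comm LD recX) => /(_ i j).
by rewrite mul_mx_diag mul_diag_mx !mxE (negbTE ij) connect0 mulr0 mul1r => <-.
Qed.

Lemma fibre_shift {S' K : 'M[C]_n} : Lprime S' -> Lperp K -> forall X,
  (Lrecip X /\ Lperp (X - (S' + K))) <->
  (Lrecip X /\ (Lperp (X - S') /\ Lprime (X - S'))).
Proof.
move=> LS' perpK X; rewrite opprD addrA; split=> [[recX perpX]|[recX [perpX _]]].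
  split=> //; split; last exact: LprimeB (Lrecip_Lprime recX) LS'.
  by rewrite -[X - S'](subrK K); apply: LperpD.
by split=> //; apply: LperpB.
Qed.

End ColouredGraph.

Theorem mainTheorem3 (C : numClosedFieldType) (n d : nat) (G : cgraph n d)
  (m : nat) :
  @MLdegree C n d G m ->
  generic (@Lprime C n d G)
    (fun S' => has_card
       (fun X => @Lrecip C n d G X /\ (@Lperp C n d G (X - S') /\ @Lprime C n d G (X - S'))) m).
Proof.
move=> [f [[S0 [symS0 fS0]] fibre_card]].
(* split the witness S0 = cadj lam + K with K in L^perp, and shift f by K *)
have [lam perpK] := Lperp_decomposition G symS0.
set K := S0 - cadj G lam in perpK.
have [g gE] := mpoly_translate f K.
exists g; split.
  by exists (cadj G lam); split; [exact: cadj_Lprime | rewrite gE addrC subrK].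
move=> S' LS' gS'; apply: has_card_ext (fibre_shift G LS' perpK) _.
by apply: fibre_card; [exact: symmatD LS'.1 perpK.1 | rewrite -gE].
Qed.
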